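(* Let $G=(V,E)$ be a connected graph with $n$ vertices, $\tau$ a set of types with $|\tau|=k>1$, $f:\tau\to\mathbb{Q}_{\ge1}$ a fitness function, $\alpha\in\tau^+(f)$, $f^*=\max\{f(j):j\in\tau\setminus\{\alpha\}\}$, and suppose $f^*<f(\alpha)=f^+$. Let $M_0\in\Omega_0(G,\tau)$. Then $\mathbb{E}(A_\alpha(G,\tau,f,M_0))\le \frac{f^+}{f^+-f^*}(n+1)n^3$.
   Context: $f^+=\max_{i\in\tau}f(i)$, $\tau^+(f)=\{i:f(i)=f^+\}$. For $G=(V,E)$, $N(v)$ is the neighbourhood of $v$. For a state $S:V\to\tau$, $S|_{v\to w}$ equals $S$ except $w$ gets type $S(v)$. The Moran process $M(G,\tau,f,M_0)$: Markov chain on states from $M_0$; given $M_t$, choose $v$ with probability $f(M_t(v))/\sum_uf(M_t(u))$, then $w\in N(v)$ uniformly, set $M_{t+1}=M_t|_{v\to w}$. $V_j(t)=\{v:M_t(v)=j\}$. $\Omega_0(G,\tau)$ is the set of states $V\to\tau$ whose range is all of $\tau$. The absorption time of type $j$ is $A_j(G,\tau,f,M_0)=\min\{t\in\mathbb{Z}_{\ge0}: V_j(t)=V\text{ or }V_j(t)=\emptyset\}$. *)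

From HB Require Import structures.
From mathcomp Require Import all_boot all_order all_algebra.
Set Implicit Arguments. Unset Strict Implicit. Unset Printing Implicit Defensive.
Import Order.TTheory GRing.Theory Num.Theory.
Local Open Scope ring_scope.

Section Moran.
Variables (V tau : finType) (e : rel V) (f : tau -> rat).

Definition nbhd (v : V) : {set V} := [set w | e v w].

Definition state := {ffun V -> tau}.

(* f^+ and f^* (the max over an empty/nonempty family, default 0 is harmless
   since fitnesses are >= 1 and tau has >= 2 elements). *)
Definition fplus : rat := \big[Num.max/0]_(i : tau) f i.
Definition tauplus : {set tau} := [set i | f i == fplus].
Definition fstar (alpha : tau) : rat := \big[Num.max/0]_(j : tau | j != alpha) f j.

Definition Omega0 (S : state) : bool := [forall j : tau, exists v : V, S v == j].

Definition upd (S : state) (v w : V) : state :=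
  [ffun x => if x == w then S v else S x].

Definition total_fitness (S : state) : rat := \sum_(u : V) f (S u).

Definition trans (S S' : state) : rat :=
  \sum_(v : V) \sum_(w in nbhd v)
     (if upd S v w == S' then
        (f (S v) / total_fitness S) * (#|nbhd v|%:R)^-1
      else 0).

Definition absorbed (j : tau) (S : state) : bool :=
  [forall v, S v == j] || [forall v, S v != j].

(* surv j M0 t S = P(M_t = S and A_j > t), i.e. the chain killed at absorption. *)
Fixpoint surv (j : tau) (M0 : state) (t : nat) : {ffun state -> rat} :=
  match t with
  | 0 => [ffun S => if (S == M0) && ~~ absorbed j S then 1 else 0]
  | t'.+1 => [ffun S' => if absorbed j S' then 0
                        else \sum_(S : state) surv j M0 t' S * trans S S']
  end.

Definition tail_prob (j : tau) (M0 : state) (t : nat) : rat :=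
  \sum_(S : state) surv j M0 t S.

(* E(A_j) = sum_{t>=0} P(A_j > t) (an extended nonnegative real);
   "E(A_j) <= b" is stated as: every partial sum of this series is <= b. *)
Definition expected_absorption_le (j : tau) (M0 : state) (b : rat) : Prop :=
  forall N : nat, \sum_(t < N) tail_prob j M0 t <= b.

End Moran.

From HB Require Import structures.
From mathcomp Require Import all_boot all_order all_algebra ring lra.
Import Order.TTheory GRing.Theory Num.Theory.
Local Open Scope ring_scope.
Set Implicit Arguments. Unset Strict Implicit.

(** Weight each [alpha]-vertex by the inverse of its degree.  Along an edge
  [v w] with [S v = alpha] and [S w <> alpha], [v] reproduces onto [w] with
  probability [f alpha / (F deg v)], raising the weight by [1 / deg w], and [w]
  reproduces onto [v] with probability [f (S w) / (F deg w)], lowering it by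
  [1 / deg v], where [F] is the total fitness.  All other moves leave the
  weight unchanged, so its expected gain is the sum over such boundary edges of
  [(f alpha - f (S w)) / (F deg v deg w) >= (f alpha - fstar) / (f alpha n^3)].
  A boundary edge exists until [alpha] is absorbed because the graph is
  connected, and the weight never exceeds [n], so additive drift bounds the
  expected absorption time by [n^4 f alpha / (f alpha - fstar)]. *)

Section Connected.
Variables (V : finType) (e : rel V).
Hypothesis e_sym : symmetric e.
Hypothesis e_conn : forall x y : V, connect e x y.

Lemma exists_boundary_edge (P : pred V) x y : P x -> ~~ P y ->
  exists v w, [/\ e v w, P v & ~~ P w].
Proof.
move=> Px nPy.
suff : [exists v, exists w, [&& e v w, P v & ~~ P w]].
  by case/existsP=> v /existsP[w /and3P[evw Pv nPw]]; exists v, w.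
apply: contraT => /existsPn no_edge.
have P_closed : closed e P.
  move=> u w euw; rewrite -!topredE /=.
  apply/idP/idP => [Pu|Pw]; apply: contraT => nP.
  - by have /existsPn/(_ w) := no_edge u; rewrite euw Pu nP.
  - by have /existsPn/(_ u) := no_edge w; rewrite e_sym euw Pw nP.
have := closed_connect P_closed (e_conn x y).
by rewrite -!topredE /= Px (negbTE nPy).
Qed.

End Connected.

Section AdditiveDrift.
Variables (V tau : finType) (e : rel V) (f : tau -> rat) (j : tau).
Hypothesis f_ge0 : forall i, 0 <= f i.

Lemma total_fitness_ge0 (S : state V tau) : 0 <= total_fitness f S.
Proof. exact: sumr_ge0. Qed.

Lemma trans_ge0 (S S' : state V tau) : 0 <= trans e f S S'.
Proof.
apply: sumr_ge0 => v _; apply: sumr_ge0 => w _; case: ifP => // _.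
by rewrite !mulr_ge0 ?invr_ge0 ?total_fitness_ge0.
Qed.

Lemma surv_ge0 M0 t S : 0 <= surv e f j M0 t S.
Proof.
elim: t S => [|t IH] S /=; rewrite ffunE; first by case: ifP.
by case: ifP => // _; apply: sumr_ge0 => S' _; rewrite mulr_ge0 ?trans_ge0.
Qed.

Lemma surv_absorbed M0 t S : absorbed j S -> surv e f j M0 t S = 0.
Proof. by case: t => [|t] /= absS; rewrite ffunE absS ?andbF. Qed.

Variables (psi : state V tau -> rat) (delta : rat).
Hypothesis psi_ge0 : forall S, 0 <= psi S.
Hypothesis psi_drift : forall S, ~~ absorbed j S ->
  \sum_S' trans e f S S' * psi S' <= psi S - delta.

Let mean_psi M0 t := \sum_S surv e f j M0 t S * psi S.

Lemma mean_psi_step M0 t :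
  mean_psi M0 t.+1 <= mean_psi M0 t - delta * tail_prob e f j M0 t.
Proof.
rewrite /mean_psi /tail_prob mulr_sumr -sumrB.
apply: (@le_trans _ _
  (\sum_S' (\sum_S surv e f j M0 t S * trans e f S S') * psi S')).
  apply: ler_sum => S' _ /=; rewrite ffunE; case: ifP => // _.
  rewrite mul0r mulr_ge0 // sumr_ge0 // => S _.
  by rewrite mulr_ge0 ?surv_ge0 ?trans_ge0.
under eq_bigr do rewrite mulr_suml.
rewrite exchange_big /=; apply: ler_sum => S _.
under eq_bigr do rewrite -mulrA.
rewrite -mulr_sumr [delta * _]mulrC -mulrBr.
have [absS|nabsS] := boolP (absorbed j S).
  by rewrite surv_absorbed ?mul0r.
by rewrite ler_wpM2l ?surv_ge0 ?psi_drift.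
Qed.

Lemma additive_drift M0 N : delta * \sum_(t < N) tail_prob e f j M0 t <= psi M0.
Proof.
have mean_psi_ge0 t : 0 <= mean_psi M0 t.
  by apply: sumr_ge0 => S _; rewrite mulr_ge0 ?surv_ge0.
have mean_psi0 : mean_psi M0 0 <= psi M0.
  rewrite /mean_psi (bigD1 M0) //= big1 ?addr0 => [|S /negbTE nS]; last first.
    by rewrite ffunE nS mul0r.
  by rewrite ffunE eqxx; case: (absorbed j M0); rewrite ?mul0r ?mul1r.
suff : mean_psi M0 N + delta * \sum_(t < N) tail_prob e f j M0 t
       <= mean_psi M0 0.
  by have := mean_psi_ge0 N; lra.
elim: N => [|N IH]; first by rewrite big_ord0 mulr0 addr0.
by rewrite big_ord_recr /= mulrDr; have := mean_psi_step M0 N; lra.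
Qed.

End AdditiveDrift.

Section AlphaWeight.
Variables (V tau : finType) (e : rel V) (f : tau -> rat) (alpha : tau).
Hypothesis e_sym : symmetric e.
Hypothesis e_conn : forall x y : V, connect e x y.
Hypothesis f_gt0 : forall i, 0 < f i.
Hypothesis f_le_alpha : forall i, f i <= f alpha.
Hypothesis fstar_lt : fstar f alpha < f alpha.

Let f_ge0 i : 0 <= f i := ltW (f_gt0 i).

Definition deg (v : V) : rat := #|nbhd e v|%:R.

Lemma deg_le_card v : deg v <= #|V|%:R.
Proof. by rewrite ler_nat max_card. Qed.

Lemma deg_inv_le1 v : 0 <= (deg v)^-1 <= 1.
Proof.
rewrite /deg; case: #|nbhd e v| => [|d]; first by rewrite invr0 lexx ler01.
by rewrite invr_ge0 ler0n invf_le1 ?ltr0Sn // ler1n.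
Qed.

Definition alpha_weight (S : state V tau) : rat :=
  \sum_x (S x == alpha)%:R / deg x.

Definition rate (S : state V tau) v : rat :=
  f (S v) / total_fitness f S / deg v.

Lemma rate_ge0 S v : 0 <= rate S v.
Proof.
have /andP[? _] := deg_inv_le1 v.
by rewrite !mulr_ge0 ?invr_ge0 ?total_fitness_ge0.
Qed.

Lemma total_rate_le1 S : \sum_v \sum_(w in nbhd e v) rate S v <= 1.
Proof.
apply: (@le_trans _ _ (\sum_v f (S v) / total_fitness f S)).
  apply: ler_sum => v _; rewrite sumr_const -mulr_natr -mulrA -/(deg v).
  have [->|deg_neq0] := eqVneq (deg v) 0; last by rewrite mulVf ?mulr1.
  by rewrite invr0 mul0r mulr0 divr_ge0 ?total_fitness_ge0.
rewrite -mulr_suml.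
have [->|F_neq0] := eqVneq (total_fitness f S) 0; first by rewrite invr0 mulr0.
by rewrite mulfV.
Qed.

Lemma sum_trans_mul (g : state V tau -> rat) S :
  \sum_S' trans e f S S' * g S' =
  \sum_v \sum_(w in nbhd e v) rate S v * g (upd S v w).
Proof.
under eq_bigr do rewrite mulr_suml.
rewrite exchange_big /=; apply: eq_bigr => v _.
under eq_bigr do rewrite mulr_suml.
rewrite exchange_big /=; apply: eq_bigr => w _.
rewrite (bigD1 (upd S v w)) //= eqxx big1 ?addr0 // => S' /negbTE nS'.
by rewrite eq_sym nS' mul0r.
Qed.

Lemma alpha_weight_upd S v w : alpha_weight (upd S v w) =
  alpha_weight S + ((S v == alpha)%:R - (S w == alpha)%:R) / deg w.
Proof.
rewrite /alpha_weight (bigD1 w) //= [in RHS](bigD1 w) //= ffunE eqxx.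
rewrite (eq_bigr (fun x => (S x == alpha)%:R / deg x)); first by ring.
by move=> x /negbTE nxw; rewrite ffunE nxw.
Qed.

Definition edge_gain (S : state V tau) v w : rat :=
  if e v w then
    (S v == alpha)%:R * (1 - (S w == alpha)%:R) * (f (S v) - f (S w))
      / (total_fitness f S * deg v * deg w)
  else 0.

Lemma alpha_weight_drift S :
  \sum_v \sum_(w in nbhd e v)
     rate S v * (((S v == alpha)%:R - (S w == alpha)%:R) / deg w) =
  \sum_v \sum_w edge_gain S v w.
Proof.
pose a x : rat := (S x == alpha)%:R.
pose c v w : rat := (total_fitness f S * deg v * deg w)^-1.
have c_sym v w : c v w = c w v by rewrite /c -!mulrA [deg v * _]mulrC.
pose spread v w := if e v w then f (S v) * a v * (1 - a w) * c v w else 0.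
pose retreat v w := if e v w then f (S v) * a w * (1 - a v) * c v w else 0.
have -> : \sum_v \sum_(w in nbhd e v) rate S v * ((a v - a w) / deg w) =
          \sum_v \sum_w spread v w - \sum_v \sum_w retreat v w.
  rewrite -sumrB; apply: eq_bigr => v _; rewrite -sumrB big_mkcond /=.
  apply: eq_bigr => w _; rewrite /spread /retreat inE.
  by case: (e v w); rewrite ?subr0 // /rate /c !invfM; ring.
rewrite [\sum_v \sum_w retreat v w]exchange_big -sumrB.
apply: eq_bigr => v _; rewrite -sumrB; apply: eq_bigr => w _.
rewrite /spread /retreat /edge_gain [e w v]e_sym [c w v]c_sym.
rewrite /c -/(a v) -/(a w).
by case: (e v w); rewrite ?subr0 //; ring.
Qed.

Lemma edge_gain_ge0 (S : state V tau) v w : 0 <= edge_gain S v w.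
Proof.
rewrite /edge_gain; case: (e v w) => //.
have [-> | _] := eqVneq (S v) alpha; last by rewrite !mul0r.
have [-> | _] := eqVneq (S w) alpha; first by rewrite subrr mulr0 !mul0r.
rewrite subr0 !mul1r mulr_ge0 ?subr_ge0 // invr_ge0.
by rewrite !mulr_ge0 ?total_fitness_ge0 ?ler0n.
Qed.

Definition min_drift : rat :=
  (f alpha - fstar f alpha) / (f alpha * #|V|%:R ^+ 3).

Lemma total_fitness_le (S : state V tau) :
  total_fitness f S <= #|V|%:R * f alpha.
Proof.
rewrite (le_trans (ler_sum _ (fun u _ => f_le_alpha (S u)))) //.
by rewrite sumr_const mulr_natl.
Qed.

Lemma min_drift_le_edge_gain (S : state V tau) v w :
  e v w -> S v = alpha -> S w != alpha -> min_drift <= edge_gain S v w.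
Proof.
move=> evw Sv Sw.
rewrite /edge_gain evw Sv (negbTE Sw) eqxx subr0 !mul1r.
have f_Sw : f (S w) <= fstar f alpha.
  by apply: (le_bigmax_cond _ (fun j => f j)).
have F_gt0 : 0 < total_fitness f S.
  by rewrite /total_fitness (bigD1 v) //= ltr_pwDl ?sumr_ge0.
have deg_v : 1 <= deg v.
  by rewrite ler1n; apply/card_gt0P; exists w; rewrite inE.
have deg_w : 1 <= deg w.
  by rewrite ler1n; apply/card_gt0P; exists v; rewrite inE e_sym.
have denom_le : total_fitness f S * deg v * deg w <= f alpha * #|V|%:R ^+ 3.
  have -> : f alpha * #|V|%:R ^+ 3 = #|V|%:R * f alpha * #|V|%:R * #|V|%:R.
    by ring.
  by rewrite !ler_pM ?mulr_ge0 ?total_fitness_le ?deg_le_card //; lra.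
have n_gt0 : 0 < (#|V|%:R : rat) by have := deg_le_card v; lra.
rewrite /min_drift ler_pM ?lerB ?invr_ge0 ?subr_ge0 ?(ltW fstar_lt) //.
  by rewrite mulr_ge0 ?exprn_ge0 ?ltW.
by rewrite lef_pV2 ?posrE ?mulr_gt0 ?exprn_gt0 //; lra.
Qed.

Lemma min_drift_le_sum_edge_gain (S : state V tau) : ~~ absorbed alpha S ->
  min_drift <= \sum_v \sum_w edge_gain S v w.
Proof.
rewrite /absorbed negb_or => /andP[/forallPn[x Sx] /forallPn[y /negbNE Sy]].
have [v [w [evw /eqP Sv Sw]]] :=
  exists_boundary_edge e_sym e_conn (P := fun u => S u == alpha) Sy Sx.
have gain_vw := min_drift_le_edge_gain evw Sv Sw.
rewrite (bigD1 v) //= (bigD1 w) //=.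
have : 0 <= \sum_(u | u != w) edge_gain S v u.
  by apply: sumr_ge0 => u _; apply: edge_gain_ge0.
have : 0 <= \sum_(u | u != v) \sum_w edge_gain S u w.
  by apply: sumr_ge0 => u _; apply: sumr_ge0 => w' _; apply: edge_gain_ge0.
lra.
Qed.

Lemma alpha_weight_ge0 (S : state V tau) : 0 <= alpha_weight S.
Proof.
by apply: sumr_ge0 => x _; have /andP[? _] := deg_inv_le1 x; rewrite mulr_ge0.
Qed.

Lemma alpha_weight_le_card (S : state V tau) : alpha_weight S <= #|V|%:R.
Proof.
apply: (@le_trans _ _ (\sum_(x : V) 1)); last by rewrite sumr_const.
apply: ler_sum => x _; have /andP[_ deg_inv_le1] := deg_inv_le1 x.
by case: (S x == alpha); rewrite ?mul1r ?mul0r.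
Qed.

Definition alpha_deficit (S : state V tau) : rat := #|V|%:R - alpha_weight S.

Lemma alpha_deficit_ge0 (S : state V tau) : 0 <= alpha_deficit S.
Proof. by rewrite subr_ge0 alpha_weight_le_card. Qed.

Lemma alpha_deficit_drift (S : state V tau) : ~~ absorbed alpha S ->
  \sum_S' trans e f S S' * alpha_deficit S' <= alpha_deficit S - min_drift.
Proof.
move=> nabsS; rewrite sum_trans_mul.
set T := \sum_v \sum_(w in nbhd e v) rate S v.
have -> : \sum_v \sum_(w in nbhd e v) rate S v * alpha_deficit (upd S v w) =
    T * alpha_deficit S - \sum_v \sum_(w in nbhd e v)
      rate S v * (((S v == alpha)%:R - (S w == alpha)%:R) / deg w).
  rewrite /T mulr_suml -sumrB; apply: eq_bigr => v _.
  rewrite mulr_suml -sumrB; apply: eq_bigr => w _.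
  by rewrite /alpha_deficit alpha_weight_upd; ring.
rewrite alpha_weight_drift.
have := min_drift_le_sum_edge_gain nabsS.
have : T * alpha_deficit S <= alpha_deficit S.
  by rewrite ler_piMl ?alpha_deficit_ge0 ?total_rate_le1 ?sumr_ge0 // => *;
    rewrite sumr_ge0 // => *; rewrite rate_ge0.
lra.
Qed.

End AlphaWeight.

Theorem corollary14 (V tau : finType) (e : rel V)
  (e_sym : symmetric e) (e_irr : irreflexive e)
  (G_conn : forall x y : V, connect e x y)
  (n k : nat) (hn : #|V| = n) (hk : #|tau| = k) (hk1 : (1 < k)%N)
  (f : tau -> rat) (hf : forall i, 1 <= f i)
  (alpha : tau) (halpha : alpha \in tauplus f)
  (hstar : fstar f alpha < f alpha)
  (M0 : state V tau) (hM0 : Omega0 M0) :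
  expected_absorption_le e f alpha M0
    (fplus f / (fplus f - fstar f alpha) * ((n + 1) * n ^ 3)%N%:R).
Proof.
have f_alpha : f alpha = fplus f by move: halpha; rewrite inE => /eqP.
have f_le_alpha i : f i <= f alpha.
  by rewrite f_alpha; apply: (le_bigmax _ (fun j => f j)).
have f_gt0 i : 0 < f i by apply: lt_le_trans (hf i).
have n_gt0 : (0 < n)%N.
  have /forallP/(_ alpha)/existsP[v _] := hM0.
  by rewrite -hn; apply/card_gt0P; exists v.
move=> N; rewrite -f_alpha.
have := additive_drift (fun i => ltW (f_gt0 i)) (alpha_deficit_ge0 e alpha)
  (alpha_deficit_drift e_sym G_conn f_gt0 f_le_alpha hstar) M0 N.
set X := \sum_(t < N) _ => drift_le.
have deficit_le : alpha_deficit e alpha M0 <= n%:R.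
  by rewrite -hn gerBl alpha_weight_ge0.
have gap_gt0 : 0 < f alpha - fstar f alpha by rewrite subr_gt0.
have delta_gt0 : 0 < min_drift V f alpha.
  by rewrite divr_gt0 // mulr_gt0 ?exprn_gt0 // hn ltr0n.
have -> : f alpha / (f alpha - fstar f alpha) * ((n + 1) * n ^ 3)%N%:R =
          (n%:R + 1) / min_drift V f alpha.
  rewrite /min_drift hn natrM natrX natrD; field.
  by rewrite !gt_eqF ?ltr0n ?f_gt0.
rewrite ler_pdivlMr //; lra.
Qed.
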